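(* Let $R$ be a ring. Then $R$ is D-regularly nil clean if, and only if, the quotient ring $R/J(R)$ is D-regularly nil clean and the Jacobson radical $J(R)$ is a nil ideal.
   Context: All rings are associative with identity $1\neq 0$. $Id(R)$ denotes the set of idempotents of $R$, $Nil(R)$ the set of nilpotent elements, $J(R)$ the Jacobson radical. A ring $R$ is called D-regularly nil clean if for each $a\in R$ there exists an idempotent $e\in aRa\cap Id(R)$ such that $a(1-e)\in Nil(R)$. *)

From HB Require Import structures.
From mathcomp Require Import all_boot all_algebra.
Set Implicit Arguments. Unset Strict Implicit. Unset Printing Implicit Defensive.
Import GRing.Theory.
Local Open Scope ring_scope.

Definition is_idem (R : nzRingType) (e : R) : Prop := e * e = e.
Definition is_nil (R : nzRingType) (x : R) : Prop := exists n : nat, x ^+ n = 0.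
Definition in_aRa (R : nzRingType) (a e : R) : Prop := exists r : R, e = a * r * a.

Definition DRNC (R : nzRingType) : Prop :=
  forall a : R, exists e : R, in_aRa a e /\ is_idem e /\ is_nil (a * (1 - e)).

Definition jacobson (R : nzRingType) (x : R) : Prop :=
  forall r : R, exists y : R, y * (1 - r * x) = 1 /\ (1 - r * x) * y = 1.

Definition jacobson_nil (R : nzRingType) : Prop :=
  forall x : R, jacobson x -> is_nil x.

(* Congruence modulo J(R): x̄ = ȳ in R/J(R). *)
Definition eqJ (R : nzRingType) (x y : R) : Prop := jacobson (x - y).

(* R/J(R) is D-regularly nil clean, written out on representatives:
   every class ā has a class ē with ē ∈ āR̄ā, ē² = ē, and ā(1̄-ē) nilpotent. *)
Definition DRNC_mod_J (R : nzRingType) : Prop :=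
  forall a : R, exists e : R,
    (exists r : R, eqJ e (a * r * a)) /\
    eqJ (e * e) e /\
    (exists n : nat, eqJ ((a * (1 - e)) ^+ n) 0).

From HB Require Import structures.
From mathcomp Require Import all_boot all_algebra.
From mathcomp Require Import ring.
Import GRing.Theory.
Set Implicit Arguments.
Local Open Scope ring_scope.

(* If R is D-regularly nil clean and x lies in J(R), the idempotent e = x r x
   attached to x lies in J(R), hence e = 0, and x = x (1 - e) is nilpotent.
   Conversely, given a ∈ R, choose e ≡ a r a modulo J(R) as in R/J(R); then
   f := a r a is idempotent modulo the nil ideal J(R), and the Newton iteration
   p ↦ p² (3 - 2p), started at f, reaches an idempotent q ∈ f R f with
   q ≡ f ≡ e modulo J(R). So a (1 - q) is nilpotent modulo J(R), hence
   nilpotent. *)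

Section NewtonIteration.
Context {S : comNzRingType}.
Implicit Types x p : S.

Definition newton p : S := p * p * (3 - 2 * p).

Lemma newton_defect p :
  newton p * newton p - newton p = (p * p - p) ^+ 2 * (4 * (p * p - p) - 3).
Proof. by rewrite /newton; ring. Qed.

Lemma iter_newton_defect x k :
  exists c, iter k newton x * iter k newton x - iter k newton x
            = (x * x - x) ^+ (2 ^ k) * c.
Proof.
elim: k => [|k [c IH]] /=; first by exists 1; rewrite expn0 expr1 mulr1.
set d := x * x - x.
exists (c ^+ 2 * (4 * (d ^+ (2 ^ k) * c) - 3)).
by rewrite newton_defect IH expnS mulnC exprM; ring.
Qed.

Lemma iter_newton_corner x k : exists u, iter k.+1 newton x = x * u * x.
Proof.
elim: k => [|k [u IH]]; first by exists (3 - 2 * x); rewrite /= /newton; ring.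
exists (u * x * x * u * (3 - 2 * iter k.+1 newton x)).
by rewrite iterS /newton {1 2}IH; ring.
Qed.

(* The step uses newton p - p = - (p² - p)(2p - 1), and x² - x divides p² - p
   as soon as it divides p - x. *)
Lemma iter_newton_sub x k :
  exists s, iter k newton x - x = (x * x - x) * s.
Proof.
elim: k => [|k [s IH]] /=; first by exists 0; rewrite subrr mulr0.
set p := iter k newton x.
have -> : p = x + (x * x - x) * s by rewrite -IH addrC subrK.
exists (s - (1 + 2 * x * s + (x * x - x) * s ^+ 2 - s)
          * (2 * (x + (x * x - x) * s) - 1)).
by rewrite /newton; ring.
Qed.

End NewtonIteration.

Section IdempotentLifting.
Variable R : nzRingType.

Lemma expr_eq0_ge (x : R) m n : x ^+ m = 0 -> (m <= n)%N -> x ^+ n = 0.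
Proof. by move=> xm0 le_mn; rewrite -(subnKC le_mn) exprD xm0 mul0r. Qed.

(* Evaluation at f of integer polynomials is a ring morphism {poly int} -> R,
   which transports the identities of the Newton iteration proved in the free
   commutative ring {poly int} on 'X. *)
Lemma nil_idempotent_lift (f : R) :
  is_nil (f * f - f) ->
  exists e u s, is_idem e /\ e = f * u * f /\ e - f = (f * f - f) * s.
Proof.
move=> [m nil_f].
pose ev : {rmorphism {poly int} -> R} := horner_morph (fun n : int => commr_int f n).
have evX : ev 'X = f by exact: horner_morphX.
have evD : ev ('X * 'X - 'X) = f * f - f by rewrite rmorphB rmorphM evX.
set p := iter m.+1 newton ('X : {poly int}).
have [c Dc] := iter_newton_defect ('X : {poly int}) m.+1.
have [u Du] := iter_newton_corner ('X : {poly int}) m.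
have [s Ds] := iter_newton_sub ('X : {poly int}) m.+1.
exists (ev p), (ev u), (ev s); split; last split.
- apply/eqP; rewrite -subr_eq0 -rmorphM -rmorphB Dc rmorphM rmorphXn evD.
  rewrite (@expr_eq0_ge _ m) ?mul0r //.
  exact/ltnW/ltnW/ltn_expl.
- by rewrite /p Du !rmorphM evX.
- by rewrite -[X in _ - X]evX -rmorphB Ds rmorphM evD.
Qed.

End IdempotentLifting.

Section Jacobson.
Variable R : nzRingType.
Implicit Types e f x y z t : R.

Lemma jacobson0 : jacobson (0 : R).
Proof. by move=> r; exists 1; rewrite mulr0 subr0 mul1r. Qed.

Lemma jacobsonMl t x : jacobson x -> jacobson (t * x).
Proof. by move=> Jx r; rewrite mulrA. Qed.

Lemma jacobsonN x : jacobson x -> jacobson (- x).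
Proof. by move=> Jx r; rewrite mulrN -mulNr. Qed.

(* 1 - r (x + y) = (1 - r x)(1 - u r y), where u is the inverse of 1 - r x. *)
Lemma jacobsonD x y : jacobson x -> jacobson y -> jacobson (x + y).
Proof.
move=> Jx Jy r; have [u [u1 u2]] := Jx r.
have [v [v1 v2]] := Jy (u * r).
have -> : 1 - r * (x + y) = (1 - r * x) * (1 - u * r * y).
  by rewrite mulrBr mulr1 !mulrA u2 mul1r mulrDr opprD addrA.
exists (v * u); split.
  by rewrite -mulrA (mulrA u) u1 mul1r v1.
by rewrite -mulrA (mulrA _ v) v2 mul1r u2.
Qed.

(* If u inverts 1 - (t r) x, then 1 + r x u t inverts 1 - r (x t). *)
Lemma jacobsonMr x t : jacobson x -> jacobson (x * t).
Proof.
move=> Jx r; have [u [u1 u2]] := Jx (t * r).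
exists (1 + r * x * u * t); split.
- have -> : (1 + r * x * u * t) * (1 - r * (x * t)) =
            1 + r * x * (u * (1 - t * r * x) - 1) * t.
    rewrite !(mulrDl, mulrDr, mulrBl, mulrBr, mul1r, mulr1, mulrN, mulNr, mulrA, opprD, opprK).
    by rewrite addrAC -addrA.
  by rewrite u1 subrr mulr0 mul0r addr0.
- have -> : (1 - r * (x * t)) * (1 + r * x * u * t) =
            1 + r * x * ((1 - t * r * x) * u - 1) * t.
    rewrite !(mulrDl, mulrDr, mulrBl, mulrBr, mul1r, mulr1, mulrN, mulNr, mulrA, opprD, opprK).
    by rewrite -!addrA; congr (_ + (_ + _)); rewrite addrC.
  by rewrite u2 subrr mulr0 mul0r addr0.
Qed.

Lemma jacobson_idem_eq0 e : jacobson e -> is_idem e -> e = 0.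
Proof.
move=> Je idem_e; have [y [_ y_inv]] := Je 1.
have e1e : e * (1 - e) = 0 by rewrite mulrBr mulr1 idem_e subrr.
by rewrite -[e]mulr1 -y_inv mul1r mulrA e1e mul0r.
Qed.

Lemma eqJ_refl x : eqJ x x.
Proof. by rewrite /eqJ subrr; apply: jacobson0. Qed.

Lemma eqJ_sym x y : eqJ x y -> eqJ y x.
Proof. by move=> Jxy; rewrite /eqJ -opprB; apply: jacobsonN. Qed.

Lemma eqJ_trans x y z : eqJ x y -> eqJ y z -> eqJ x z.
Proof.
by move=> Jxy Jyz; rewrite /eqJ -(subrK y x) -addrA; apply: jacobsonD.
Qed.

Lemma eqJ_mull t x y : eqJ x y -> eqJ (t * x) (t * y).
Proof. by rewrite /eqJ -mulrBr; apply: jacobsonMl. Qed.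

Lemma eqJ_mulr t x y : eqJ x y -> eqJ (x * t) (y * t).
Proof. by rewrite /eqJ -mulrBl; apply: jacobsonMr. Qed.

Lemma eqJ_subl t x y : eqJ x y -> eqJ (t - x) (t - y).
Proof. by move=> Jxy; rewrite /eqJ opprB addrC addrA subrK; apply: eqJ_sym. Qed.

Lemma eqJ_exp n x y : eqJ x y -> eqJ (x ^+ n) (y ^+ n).
Proof.
move=> Jxy; elim: n => [|n IH]; first exact: eqJ_refl.
rewrite !exprSr; apply: (@eqJ_trans _ (y ^+ n * x)).
  exact: eqJ_mulr.
exact: eqJ_mull.
Qed.

Lemma eqJ_idem_defect e f : eqJ e f -> eqJ (e * e) e -> jacobson (f * f - f).
Proof.
move=> Jef Jee; change (eqJ (f * f) f); have Jfe := eqJ_sym Jef.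
apply: (eqJ_trans (eqJ_mulr f Jfe)); apply: (eqJ_trans (eqJ_mull e Jfe)).
exact: eqJ_trans Jee Jef.
Qed.

Lemma jacobson_nil_eqJ_exp0 x n :
  jacobson_nil R -> eqJ (x ^+ n) 0 -> is_nil x.
Proof.
move=> nilJ Jx; have [k xnk] := nilJ _ Jx.
by exists (n * k)%N; rewrite exprM; rewrite subr0 in xnk.
Qed.

End Jacobson.

Section DRegularlyNilClean.
Variable R : nzRingType.

Lemma DRNC_mod_J_of_DRNC : DRNC R -> DRNC_mod_J R.
Proof.
move=> drnc a; have [e [[r Dr] [idem_e [n nil_e]]]] := drnc a.
exists e; split; first by exists r; rewrite -Dr; apply: eqJ_refl.
split; first by rewrite idem_e; apply: eqJ_refl.
by exists n; rewrite nil_e; apply: eqJ_refl.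
Qed.

Lemma jacobson_nil_of_DRNC : DRNC R -> jacobson_nil R.
Proof.
move=> drnc x Jx; have [e [[r Dr] [idem_e nil_x1e]]] := drnc x.
have e0 : e = 0.
  by apply: jacobson_idem_eq0 idem_e; rewrite Dr; exact: jacobsonMl.
by rewrite e0 subr0 mulr1 in nil_x1e.
Qed.

Lemma DRNC_of_mod_J : DRNC_mod_J R -> jacobson_nil R -> DRNC R.
Proof.
move=> drncJ nilJ a; have [e [[r Jear] [Jee [n Jnil]]]] := drncJ a.
have Jff : jacobson (a * r * a * (a * r * a) - a * r * a).
  exact: eqJ_idem_defect Jear Jee.
have [q [u [s [idem_q [Dq Dqf]]]]] := nil_idempotent_lift _ (nilJ _ Jff).
exists q; split; first by exists (r * a * u * a * r); rewrite Dq !mulrA.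
split=> //; apply: (@jacobson_nil_eqJ_exp0 _ _ n nilJ).
have Jqe : eqJ q e.
  by apply: eqJ_trans (eqJ_sym Jear); rewrite /eqJ Dqf; apply: jacobsonMr.
exact/(eqJ_trans _ Jnil)/eqJ_exp/eqJ_mull/eqJ_subl.
Qed.

End DRegularlyNilClean.

Theorem lemma2p1 (R : nzRingType) :
  DRNC R <-> (DRNC_mod_J R /\ jacobson_nil R).
Proof.
split=> [drnc | [drncJ nilJ]].
  by split; [apply: DRNC_mod_J_of_DRNC | apply: jacobson_nil_of_DRNC].
exact: DRNC_of_mod_J.
Qed.
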